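(* Suppose $D$ is a balanced effective divisor class on $X$ with $\chi(D)\ge1$, and $A_t$ is an ample divisor with $2A_t\cdot D\le A_t\cdot K$. Suppose $D$ is $\ell$ steps away from having equal multiplicities. Then $$\ell<\frac12\left(n-\sqrt{(8\chi(D)+1)n}\right).$$ In particular, if $10\le n\le 12$, then $\chi(D)=1$, $\ell=0$, and $D$ has equal multiplicities.
   Context: Let $X$ be the blowup of $\mathbb{P}^2_{\mathbb{C}}$ at $n$ very general points, with $H$ the pullback of a line class, $E_i$ the exceptional divisors, $E=\sum_iE_i$, and $K=K_X=-3H+E$. For real $t$, $A_t=tH-E$. Write $\chi(D)=\chi(\mathcal{O}_X(D))$; effective means the class of an effective divisor (zero allowed). A divisor $D=dH-\sum_im_iE_i$ is balanced if $|m_i-m_j|\le1$ for all $i,j$. For a balanced $D$, there are $k$ indices with multiplicity $m+1$ and $n-k$ indices with multiplicity $m$ for some $m$ and $0\le k\le n$; setting $\ell=\min\{k,n-k\}$, $D$ is said to be $\ell$ steps away from having equal multiplicities. *)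

From HB Require Import structures.
From mathcomp Require Import all_boot all_order all_algebra.
From mathcomp Require Import reals.
From mathcomp Require Import complex.
From mathcomp Require Import mpoly.

Set Implicit Arguments.
Unset Strict Implicit.
Unset Printing Implicit Defensive.

Import Order.TTheory GRing.Theory Num.Theory.
Local Open Scope ring_scope.

(* A configuration of n points of P^2 is
   given by a vector v : 'I_(n*3) -> R[i] of homogeneous coordinates; the
   i-th point has coordinates (fun j : 'I_3 => v (mxvec_index i j)). *)

Section BlowupDefs.
Variables (R : realType) (n : nat).
Local Notation C := (R[i])%C.

Definition pt (v : 'I_(n * 3) -> C) (i : 'I_n) : 'I_3 -> C :=
  fun j => v (mxvec_index i j).

Definition config_ok (v : 'I_(n * 3) -> C) : Prop :=
  forall i : 'I_n, exists j : 'I_3, pt v i j != 0.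

Definition mult_ge (f : {mpoly C[3]}) (p : 'I_3 -> C) (m : int) : Prop :=
  forall a : 'X_{1..3}, ((mdeg a)%:Z < m)%R -> (f^`M[a]).@[p] = 0.

(* A divisor class D = d H - sum_i m_i E_i is represented by (d, m). *)

(* intersection form: H^2 = 1, E_i^2 = -1, H.E_i = E_i.E_j = 0 (i<>j) *)
Definition inter (d : int) (m : 'I_n -> int) (d' : int) (m' : 'I_n -> int)
  : int := d * d' - \sum_(i < n) m i * m' i.

(* canonical class K = -3H + E = -3H - sum_i (-1) E_i *)
Definition Kd : int := -3.
Definition Km : 'I_n -> int := fun _ => -1.

(* Euler characteristic chi(O_X(D)) via Riemann-Roch on the surface X:
   chi(D) = 1 + (D.D - D.K)/2  (the numerator is always even) *)
Definition chi (d : int) (m : 'I_n -> int) : int :=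
  1 + divz (inter d m d m - inter d m Kd Km) 2.

(* D is effective: H^0(X, O_X(dH - sum m_i E_i)) <> 0, i.e. there is a
   nonzero homogeneous polynomial of degree d vanishing to order >= m_i
   at the i-th point (zero divisor allowed: f constant) *)
Definition effective (v : 'I_(n * 3) -> C) (d : int) (m : 'I_n -> int)
  : Prop :=
  exists f : {mpoly C[3]},
    [/\ f != 0, (0 <= d)%R, f \is (`|d|%N).-homog
      & forall i : 'I_n, mult_ge f (pt v i) (m i)].

Definition irred_homog (f : {mpoly C[3]}) (e : nat) : Prop :=
  [/\ (0 < e)%N, f \is e.-homog, f != 0 &
      forall g h : {mpoly C[3]}, f = g * h -> (msize g <= 1)%N \/ (msize h <= 1)%N].

(* intersection number A_t . D for the R-divisor A_t = tH - E *)
Definition interA (t : R) (d : int) (m : 'I_n -> int) : R :=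
  t * d%:~R - \sum_(i < n) (m i)%:~R.

(* A_t = tH - E is ample (Nakai-Moishezon): A_t^2 = t^2 - n > 0 and
   A_t . C > 0 for every irreducible curve C on X.  The irreducible curves
   are the E_i (A_t . E_i = 1 > 0) and the strict transforms of irreducible
   plane curves f of degree e, of class eH - sum_i mult_{p_i}(f) E_i. *)
Definition ample (v : 'I_(n * 3) -> C) (t : R) : Prop :=
  (n%:R < t ^+ 2) /\
  forall (f : {mpoly C[3]}) (e : nat) (mu : 'I_n -> nat),
    irred_homog f e -> (forall i, mult_ge f (pt v i) (mu i)%:Z) ->
    \sum_(i < n) (mu i)%:R < t * e%:R.

Definition balanced (m : 'I_n -> int) : Prop :=
  forall i j : 'I_n, (`|m i - m j| <= 1)%R.

Definition steps_away (m : 'I_n -> int) (l : nat) : Prop :=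
  exists (mm : int) (k : nat),
    [/\ (k <= n)%N, (forall i, m i = mm \/ m i = mm + 1),
        #|[set i | m i == mm + 1]| = k & l = minn k (n - k)].

(* a property holds for n very general points: it holds outside a countable
   union of proper Zariski-closed subsets of the configuration space *)
Definition very_general (P : ('I_(n * 3) -> C) -> Prop) : Prop :=
  exists Q : nat -> {mpoly C[n * 3]},
    (forall k, Q k != 0) /\
    forall v, config_ok v -> (forall k, (Q k).@[v] != 0) -> P v.

End BlowupDefs.

From HB Require Import structures.
From mathcomp Require Import all_boot all_order all_algebra.
From mathcomp Require Import reals.
From mathcomp Require Import complex.
From mathcomp Require Import mpoly.
From mathcomp Require Import ring lra zify.

(* Write a_i = 2 m_i + 1.  Riemann-Roch and chi(D) >= 1 give
   (2d+3)^2 >= 8 chi(D) + 1 - n + sum a_i^2, while 2 A_t.D <= A_t.K reads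
   (2d+3) t <= sum a_i; since t^2 > n and t > 0 (A_t is positive on a line),
   n (2d+3)^2 < (sum a_i)^2.  For a balanced D with k multiplicities m+1,
   n sum a_i^2 - (sum a_i)^2 = 4 k (n-k) = n^2 - (n - 2l)^2, so altogether
   (8 chi(D) + 1) n < (n - 2l)^2, which is the bound on l.  For 10 <= n <= 12
   it leaves only chi(D) = 1 and l = 0. *)

Set Implicit Arguments.
Unset Strict Implicit.
Unset Printing Implicit Defensive.
Import Order.TTheory GRing.Theory Num.Theory.
Local Open Scope ring_scope.

Lemma sum_indicator (R : semiRingType) (T : finType) (A : {set T}) :
  \sum_(i : T) ((i \in A)%:R : R) = #|A|%:R.
Proof.
rewrite -sumr_const [RHS]big_mkcond /=; apply: eq_bigr => i _.
by case: (i \in A).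
Qed.

Lemma two_valued_sum_sqr_defect (R : comRingType) (n : nat) (x y : R)
    (A : {set 'I_n}) (f : 'I_n -> R) :
  (forall i, f i = x + (i \in A)%:R * y) ->
  n%:R * \sum_i f i ^+ 2 - (\sum_i f i) ^+ 2
    = #|A|%:R * (n%:R - #|A|%:R) * y ^+ 2.
Proof.
move=> fE.
have sum_f : \sum_i f i = n%:R * x + #|A|%:R * y.
  under eq_bigr do rewrite fE.
  rewrite big_split /= sumr_const card_ord -mulr_suml sum_indicator.
  by rewrite -(mulr_natl x).
have sum_f2 : \sum_i f i ^+ 2 = n%:R * x ^+ 2 + #|A|%:R * (2 * x * y + y ^+ 2).
  transitivity (\sum_i (x ^+ 2 + (i \in A)%:R * (2 * x * y + y ^+ 2))).
    apply: eq_bigr => i _; rewrite fE; case: (i \in A) => /=; ring.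
  rewrite big_split /= sumr_const card_ord -mulr_suml sum_indicator.
  by rewrite -(mulr_natl (x ^+ 2)).
rewrite sum_f sum_f2; ring.
Qed.

Lemma sqr_sub_double_minn (k n : nat) : (k <= n)%N ->
  (n%:Z - 2 * (minn k (n - k))%:Z) ^+ 2 = n%:Z ^+ 2 - 4 * k%:Z * (n%:Z - k%:Z).
Proof.
move=> kn; case: leqP => _; first ring.
rewrite -subzn //; ring.
Qed.

Lemma steps_away_le (n : nat) (m : 'I_n -> int) (l : nat) :
  steps_away m l -> (2 * l <= n)%N.
Proof. by move=> [mm [k [kn _ _ ->]]]; lia. Qed.

Lemma steps_away_sum_sqr_defect (n : nat) (m : 'I_n -> int) (l : nat) :
  steps_away m l ->
  n%:Z * \sum_i (2 * m i + 1) ^+ 2 - (\sum_i (2 * m i + 1)) ^+ 2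
    = n%:Z ^+ 2 - (n%:Z - 2 * l%:Z) ^+ 2.
Proof.
move=> [mm [k [kn m_mm card_k ->]]].
rewrite sqr_sub_double_minn // -card_k.
have := @two_valued_sum_sqr_defect _ _ (2 * mm + 1) 2
  [set i | m i == mm + 1] (fun i => 2 * m i + 1).
rewrite !natz => -> //=; first ring.
by move=> i; rewrite inE; case: (m_mm i) => ->; lia.
Qed.

Lemma steps_away0_const (n : nat) (m : 'I_n -> int) :
  steps_away m 0 -> forall i j, m i = m j.
Proof.
move=> [mm [k [kn m_mm cardk l0]]].
have [k0 | kn'] : k = 0%N \/ k = n by lia.
  suff m_eq i : m i = mm by move=> i j; rewrite !m_eq.
  move: cardk; rewrite k0 => /cards0_eq /setP /(_ i); rewrite !inE.
  by case: (m_mm i) => -> //; rewrite eqxx.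
suff m_eq i : m i = mm + 1 by move=> i j; rewrite !m_eq.
have /setP/(_ i) : [set i | m i == mm + 1] = setT.
  by apply/eqP; rewrite eqEcard subsetT cardsT /= card_ord cardk kn'.
by rewrite !inE => /eqP.
Qed.

Lemma chi_odd_sum_bound (n : nat) (d : int) (m : 'I_n -> int) :
  8 * (chi d m - 1) + 9 - n%:Z + \sum_i (2 * m i + 1) ^+ 2 <= (2 * d + 3) ^+ 2.
Proof.
have := @lez_floor (inter d m d m - inter d m Kd (@Km n)) 2 isT.
rewrite /chi; move: (divz _ 2) => q.
have sum_sqr : \sum_i (2 * m i + 1) ^+ 2
    = 4 * \sum_i (m i * m i) + 4 * \sum_i m i + n%:Z.
  transitivity (\sum_i (4 * (m i * m i) + 4 * m i + 1)).
    by apply: eq_bigr => i _; ring.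
  by rewrite !big_split /= -!mulr_sumr sumr_const card_ord (natz n).
have sum_K : \sum_i m i * @Km n i = - \sum_i m i.
  by rewrite -sumrN; apply: eq_bigr => i _; rewrite mulrN1.
rewrite /inter sum_K sum_sqr /Kd expr2.
set S2 := \sum_(i < n) m i * m i; set S1 := \sum_(i < n) m i; nia.
Qed.

Lemma irred_homog_X (R : realType) (j : 'I_3) :
  irred_homog ('X_j : {mpoly (R[i])%C[3]}) 1.
Proof.
split => //; first by rewrite dhomogX /= mdeg1.
  by rewrite -msize_poly_eq0 msizeX mdeg1.
move=> g h gh.
have size_gh : msize (g * h) = 2%N by rewrite -gh msizeX mdeg1.
have g0 : g != 0 by apply/eqP => g0; move: size_gh; rewrite g0 mul0r msize0.
have h0 : h != 0 by apply/eqP => h0; move: size_gh; rewrite h0 mulr0 msize0.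
have g_gt0 : (0 < msize g)%N by rewrite lt0n msize_poly_eq0.
have h_gt0 : (0 < msize h)%N by rewrite lt0n msize_poly_eq0.
have := msizeM g0 h0; rewrite -gh msizeX mdeg1.
move: (msize g) (msize h) g_gt0 h_gt0 => a b; lia.
Qed.

Lemma ample_gt0 (R : realType) (n : nat) (v : 'I_(n * 3) -> (R[i])%C) (t : R) :
  ample v t -> 0 < t.
Proof.
move=> [_ /(_ _ 1%N (fun _ => 0%N) (@irred_homog_X R 0))].
rewrite big1 // mulr1; apply => i a /=.
by rewrite ltNge; case: (mdeg a).
Qed.

Lemma interA_le_canonical (R : realType) (n : nat) (t : R) (d : int)
    (m : 'I_n -> int) :
  2 * interA t d m <= interA t Kd (@Km n) ->
  (2 * d + 3)%:~R * t <= (\sum_i (2 * m i + 1))%:~R.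
Proof.
rewrite /interA /Kd /Km sumr_const card_ord rmorph_sum /=.
have -> : \sum_i ((2 * m i + 1)%:~R : R) = 2 * \sum_i (m i)%:~R + n%:R.
  under eq_bigr do rewrite rmorphD rmorphM /=.
  by rewrite big_split /= sumr_const card_ord mulr_sumr.
rewrite rmorphD rmorphM /= => ?; lra.
Qed.

Lemma lt_sqr_of_mul_le (R : realDomainType) (a x t s : R) :
  0 < x -> 0 < t -> a < t ^+ 2 -> x * t <= s -> a * x ^+ 2 < s ^+ 2.
Proof.
move=> x_gt0 t_gt0 a_lt xt_le.
have xt_gt0 : 0 < x * t by rewrite mulr_gt0.
apply: (@lt_le_trans _ _ ((x * t) ^+ 2)).
  by rewrite exprMn mulrC ltr_pM2l // exprn_gt0.
by rewrite ler_pXn2r // nnegrE ltW // (lt_le_trans xt_gt0).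
Qed.

Lemma ample_odd_sum_bound (R : realType) (n : nat) (v : 'I_(n * 3) -> (R[i])%C)
    (t : R) (d : int) (m : 'I_n -> int) :
  ample v t -> 0 <= d -> 2 * interA t d m <= interA t Kd (@Km n) ->
  n%:Z * (2 * d + 3) ^+ 2 < (\sum_i (2 * m i + 1)) ^+ 2.
Proof.
move=> At d_ge0 /interA_le_canonical le_odd_sum.
rewrite -(ltr_int R).
have := lt_sqr_of_mul_le _ (ample_gt0 At) At.1 le_odd_sum.
have : 0 < (2 * d + 3)%:~R :> R by rewrite ltr0z; lia.
lra.
Qed.

Lemma sqrt_lt_of_lt_sqr (R : rcfType) (a b : R) :
  0 <= a -> 0 <= b -> a < b ^+ 2 -> Num.sqrt a < b.
Proof.
move=> a_ge0 b_ge0 a_lt; rewrite -(ger0_norm b_ge0) -sqrtr_sqr ltr_sqrt //.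
exact: le_lt_trans a_lt.
Qed.

Lemma steps_bound_of_sqr_lt (R : rcfType) (c : int) (n l : nat) :
  0 <= c -> (2 * l <= n)%N -> (8 * c + 1) * n%:Z < (n%:Z - 2 * l%:Z) ^+ 2 ->
  l%:R < (n%:R - Num.sqrt ((8 * c%:~R + 1) * n%:R)) / 2 :> R.
Proof.
move=> c_ge0 two_l_le; rewrite -(ltr_int R) => sqr_lt.
have c_ge0R : 0 <= c%:~R :> R by rewrite ler0z.
have l_le : 2 * l%:R <= n%:R :> R by rewrite -natrM ler_nat.
have : Num.sqrt ((8 * c%:~R + 1) * n%:R) < n%:R - 2 * l%:R :> R.
  by apply: sqrt_lt_of_lt_sqr; [apply: mulr_ge0; rewrite ?ler0n; lra | lra | lra].
lra.
Qed.

Lemma chi_steps_small_n (c : int) (n l : nat) :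
  (10 <= n <= 12)%N -> 1 <= c -> (2 * l <= n)%N ->
  (8 * c + 1) * n%:Z < (n%:Z - 2 * l%:Z) ^+ 2 -> c = 1 /\ l = 0%N.
Proof.
move=> n_range c_ge1 two_l_le; rewrite expr2 => sqr_lt.
have c_lt : 8 * c + 1 < n%:Z by nia.
have c1 : c = 1 by lia.
split => //; move: sqr_lt; rewrite c1.
have [-> | [-> | ->]] : n = 10%N \/ n = 11%N \/ n = 12%N by lia.
all: nia.
Qed.

Theorem proposition4p6 (R : realType) (n : nat) :
  very_general (fun v : 'I_(n * 3) -> (R[i])%C =>
    forall (d : int) (m : 'I_n -> int) (l : nat) (t : R),
      effective v d m -> balanced m -> (1 <= chi d m)%R ->
      ample v t ->
      2 * interA t d m <= interA t Kd (@Km n) ->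
      steps_away m l ->
      (l%:R : R) < (n%:R - Num.sqrt ((8 * (chi d m)%:~R + 1) * n%:R : R)) / 2
      /\ ((10 <= n <= 12)%N ->
          [/\ chi d m = 1, l = 0%N & forall i j : 'I_n, m i = m j])).
Proof.
(* The argument is numerical, so no configuration needs to be excluded, and
   balancedness is already part of [steps_away m l]. *)
exists (fun _ => 1); split => [_ | v _ _ d m l t]; first exact: oner_neq0.
move=> [_ [_ d_ge0 _ _]] _ chi_ge1 At le_K steps.
have two_l_le := steps_away_le steps.
have sqr_lt : (8 * chi d m + 1) * n%:Z < (n%:Z - 2 * l%:Z) ^+ 2.
  have := chi_odd_sum_bound d m.
  have := ample_odd_sum_bound At d_ge0 le_K.
  have := steps_away_sum_sqr_defect steps.
  nia.
split; first by apply: steps_bound_of_sqr_lt => //; lia.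
move=> /chi_steps_small_n /(_ chi_ge1 two_l_le sqr_lt) [-> l0].
by split => //; apply: steps_away0_const; rewrite -l0.
Qed.
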